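(* Let $n$ be a positive odd integer. Then $$ \sum_{k=0}^{n-1}\frac{(aq;q^2)_k\,(-q/a;q^2)_k\, q^{2k}}{(q^2;q^2)_k} \equiv (-1)^{(n-1)/2} q^{(n^2-1)/2} \pmod{(1-aq^n)(a+q^n)}, $$ and $$ \sum_{k=0}^{n-1}\frac{(aq;q^2)_k\,(q/a;q^2)_k\, q^{2k}}{(q^2;q^2)_k} \equiv q^{(n^2-1)/2} \pmod{(1-aq^n)(a-q^n)}. $$
   Context: $a,q$ are indeterminates. The $q$-shifted factorial is $(y;q)_0=1$ and $(y;q)_m=(1-y)(1-yq)\cdots(1-yq^{m-1})$ for $m\geqslant1$. For rational functions $A,B$ and a polynomial $P$, $A\equiv B\pmod P$ means $A-B=P\cdot C/D$ for polynomials $C,D$ with $D$ coprime to $P$. *)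

From HB Require Import structures.
From mathcomp Require Import all_boot all_order all_algebra.
Set Implicit Arguments. Unset Strict Implicit. Unset Printing Implicit Defensive.
Import Order.TTheory GRing.Theory Num.Theory.
Local Open Scope ring_scope.

(* Bivariate polynomial ring Q[a,q], realised as {poly {poly rat}}:
   the inner variable is a, the outer variable is q. *)
Definition Pol := {poly {poly rat}}.
Definition RF := {fraction Pol}.

Definition toRF (p : Pol) : RF := FracField.tofrac p.

Definition var_a : Pol := ('X : {poly rat})%:P.
Definition var_q : Pol := 'X.
Definition ra : RF := toRF var_a.
Definition rq : RF := toRF var_q.

Definition qpoch (y p : RF) (m : nat) : RF := \prod_(i < m) (1 - y * p ^+ i).

(* coprimality in the (non-PID) ring Q[a,q]: every common divisor is a unit *)
Definition coprimeR (P D : Pol) : Prop :=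
  forall g h1 h2 : Pol, P = g * h1 -> D = g * h2 -> g \is a GRing.unit.

Definition congr_mod (A B : RF) (P : Pol) : Prop :=
  exists C D : Pol, coprimeR P D /\ A - B = toRF P * toRF C / toRF D.

From HB Require Import structures.
From mathcomp Require Import all_boot all_order all_algebra.
From mathcomp Require Import boolp ring zify.
Set Implicit Arguments. Unset Strict Implicit. Unset Printing Implicit Defensive.
Import GRing.Theory.
Local Open Scope ring_scope.

(* Write n = 2m+1 and, for a nonzero e in Q[q],
     S_e(x) = sum_(k<n) (xq;q^2)_k (eq/x;q^2)_k q^(2k) / (q^2;q^2)_k,
   so that the two sums of the theorem are S_(-1)(a) and S_1(a).  At x = e q^n
   and at x = q^-n one of the two Pochhammer symbols is (q^-2m;q^2)_k, and the
   q-Chu-Vandermonde summation gives S_e(x) = R := (e q^(n+1))^m at both points.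
   Since x^(2m) (S_e(x) - R) is a polynomial in x with coefficients in the
   subfield Q(q), it is divisible by (x - e q^n)(x - q^-n) with a quotient that
   is again over Q(q).  Evaluating at x = a writes S_e(a) - R as
   (1 - a q^n)(a - e q^n) C(a,q) / (a^(2m) d(q)), and a^(2m) d(q) is coprime
   to the modulus. *)

HB.instance Definition _ := GRing.RMorphism.copy toRF (@tofrac Pol).

Lemma qpoch0 y p : qpoch y p 0 = 1.
Proof. by rewrite /qpoch big_ord0. Qed.

Lemma qpochS y p k : qpoch y p k.+1 = (1 - y) * qpoch (y * p) p k.
Proof.
rewrite /qpoch big_ord_recl expr0 mulr1; congr (_ * _).
by apply: eq_bigr => i _; rewrite lift0 exprS mulrA.
Qed.

Lemma qpochSr y p k : qpoch y p k.+1 = qpoch y p k * (1 - y * p ^+ k).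
Proof. by rewrite /qpoch big_ord_recr. Qed.

Lemma qpoch1 p k : (0 < k)%N -> qpoch 1 p k = 0.
Proof. by case: k => // k _; rewrite qpochS subrr mul0r. Qed.

Section QChuVandermonde.

Variable p : RF.
Hypothesis p_not_root1 : forall k, 1 - p ^+ k.+1 != 0.

Definition chu_sum N u b :=
  \sum_(k < N) qpoch u p k * qpoch b p k * p ^+ k / qpoch p p k.

Lemma chu_sumC N u b : chu_sum N u b = chu_sum N b u.
Proof. by apply: eq_bigr => k _; rewrite (mulrC (qpoch u p k)). Qed.

Lemma chu_sumS_sub N u b :
  chu_sum N.+1 u b - chu_sum N.+1 (u * p) b =
  - (u * (1 - b) * p) * chu_sum N (u * p) (b * p).
Proof.
rewrite /chu_sum !big_ord_recl !qpoch0 opprD addrACA subrr add0r -sumrB mulr_sumr.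
apply: eq_bigr => i _; rewrite lift0 qpochS (qpochSr (u * p)) qpochS qpochSr.
have pN1 : 1 - p * p ^+ i != 0 by rewrite -exprS.
by rewrite -[RHS](mulfK pN1) invfM exprS; ring.
Qed.

Theorem q_Chu_Vandermonde m N u b :
  u * p ^+ m = 1 -> (m < N)%N -> chu_sum N u b = b ^+ m.
Proof.
elim: m N u b => [|m IHm] N u b.
  rewrite mulr1 => ->; case: N => // N _.
  rewrite /chu_sum big_ord_recl big1 => [|i _]; last by rewrite qpoch1 // !mul0r.
  by rewrite !qpoch0 invr1 !mulr1 addr0.
case: N => // N Hu ltmN; have Hup : u * p * p ^+ m = 1 by rewrite -mulrA -exprS.
move/eqP: (chu_sumS_sub N u b).
rewrite (IHm _ _ _ Hup (ltnW ltmN)) (IHm _ _ _ Hup ltmN) subr_eq => /eqP ->.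
have -> : - (u * (1 - b) * p) * (b * p) ^+ m = - (1 - b) * b ^+ m * (u * p ^+ m.+1).
  by rewrite exprMn exprS; ring.
by rewrite Hu exprS; ring.
Qed.

End QChuVandermonde.

Definition polyq (d : {poly rat}) : RF := toRF (d ^:P).
HB.instance Definition _ := GRing.RMorphism.copy polyq (@tofrac Pol \o map_poly polyC).

Lemma polyq_eq0 d : (polyq d == 0) = (d == 0).
Proof. by rewrite /polyq /toRF tofrac_eq0 map_poly_eq0. Qed.

Lemma polyqX : polyq 'X = rq.
Proof. by rewrite /polyq map_polyX. Qed.

Lemma rq_neq0 : rq != 0.
Proof. by rewrite -polyqX polyq_eq0 polyX_eq0. Qed.

Lemma ra_neq0 : ra != 0.
Proof. by rewrite /ra /toRF tofrac_eq0 /var_a polyC_eq0 polyX_eq0. Qed.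

Lemma one_sub_rqX_neq0 k : (0 < k)%N -> 1 - rq ^+ k != 0.
Proof.
move=> k_gt0; rewrite -polyqX -(rmorphXn polyq) -(rmorph1 polyq) -(rmorphB polyq).
rewrite polyq_eq0 subr_eq0; apply/eqP => /(congr1 (size : {poly rat} -> nat)).
by rewrite size_poly1 size_polyXn; case: k k_gt0.
Qed.

Lemma rq2_not_root1 k : 1 - (rq ^+ 2) ^+ k.+1 != 0.
Proof. by rewrite -exprM one_sub_rqX_neq0 // muln_gt0. Qed.

(* [qrat] is the subfield Q(q) of RF and [qfrac] the subring of the
   C(a,q) / d(q); membership is made boolean with [asbool] so that both carry
   the ring-closure structures used by [polyOver] and [rpred_horner]. *)
Definition qrat : {pred RF} :=
  fun x => `[< exists c d : {poly rat}, d != 0 /\ x = polyq c / polyq d >].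

Definition qfrac : {pred RF} :=
  fun x => `[< exists (C : Pol) (d : {poly rat}), d != 0 /\ x = toRF C / polyq d >].

Lemma qratP x :
  reflect (exists c d : {poly rat}, d != 0 /\ x = polyq c / polyq d) (x \in qrat).
Proof. exact: asboolP. Qed.

Lemma qfracP x :
  reflect (exists (C : Pol) (d : {poly rat}), d != 0 /\ x = toRF C / polyq d)
          (x \in qfrac).
Proof. exact: asboolP. Qed.

Lemma polyq_qrat c : polyq c \in qrat.
Proof. by apply/qratP; exists c, 1; rewrite rmorph1 divr1 oner_neq0. Qed.

Fact qrat_divring_closed : divring_closed qrat.
Proof.
split; first by rewrite -(rmorph1 polyq) polyq_qrat.
  move=> _ _ /qratP[c1 [d1 [d1N0 ->]]] /qratP[c2 [d2 [d2N0 ->]]].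
  apply/qratP; exists (c1 * d2 - c2 * d1), (d1 * d2); split; first exact: mulf_neq0.
  by rewrite -mulNr addf_div ?polyq_eq0 // (rmorphB polyq) !(rmorphM polyq) mulNr.
move=> _ _ /qratP[c1 [d1 [d1N0 ->]]] /qratP[c2 [d2 [d2N0 ->]]].
have [->|c2N0] := eqVneq c2 0.
  by rewrite (rmorph0 polyq) mul0r invr0 mulr0 -(rmorph0 polyq) polyq_qrat.
apply/qratP; exists (c1 * d2), (d1 * c2); split; first exact: mulf_neq0.
by rewrite invf_div mulf_div !(rmorphM polyq).
Qed.

HB.instance Definition _ := GRing.isDivringClosed.Build RF qrat qrat_divring_closed.

Fact qfrac_subring_closed : subring_closed qfrac.
Proof.
split; first by apply/qfracP; exists 1, 1; rewrite !rmorph1 divr1 oner_neq0.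
  move=> _ _ /qfracP[C1 [d1 [d1N0 ->]]] /qfracP[C2 [d2 [d2N0 ->]]].
  apply/qfracP; exists (C1 * d2 ^:P - C2 * d1 ^:P), (d1 * d2).
  split; first exact: mulf_neq0.
  by rewrite -mulNr addf_div ?polyq_eq0 // !(rmorphM polyq) rmorphB !rmorphM mulNr.
move=> _ _ /qfracP[C1 [d1 [d1N0 ->]]] /qfracP[C2 [d2 [d2N0 ->]]].
apply/qfracP; exists (C1 * C2), (d1 * d2); split; first exact: mulf_neq0.
by rewrite mulf_div (rmorphM polyq) rmorphM.
Qed.

HB.instance Definition _ := GRing.isSubringClosed.Build RF qfrac qfrac_subring_closed.

Lemma qrat_sub_qfrac : {subset qrat <= qfrac}.
Proof. by move=> _ /qratP[c [d [dN0 ->]]]; apply/qfracP; exists c ^:P, d. Qed.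

Lemma rq_qrat : rq \in qrat.
Proof. by rewrite -polyqX polyq_qrat. Qed.

Lemma ra_qfrac : ra \in qfrac.
Proof. by apply/qfracP; exists var_a, 1; rewrite rmorph1 divr1 oner_neq0. Qed.

Section PolyOverFactor.

Variables (R : idomainType) (S : subringClosed R).

Lemma polyOver_cancel_XsubC h c :
  c \in S -> h * ('X - c%:P) \is a polyOver S -> h \is a polyOver S.
Proof.
move=> Sc /polyOverP Shc; apply/polyOverP.
suff Sh d i : (size h <= i + d)%N -> h`_i \in S.
  by move=> i; apply: (Sh (size h)); rewrite leq_addl.
elim: d i => [|d IHd] i; first by rewrite addn0 => /(nth_default 0) ->; rewrite rpred0.
rewrite addnS -addSn => /IHd Sh1.
have := Shc i.+1; rewrite mulrBr coefB coefMX coefMC /= => Shi.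
by rewrite -[h`_i](subrK (h`_i.+1 * c)) rpredD ?rpredM.
Qed.

Lemma polyOver_factor2_roots G x1 x2 :
  G \is a polyOver S -> x1 \in S -> x2 \in S -> x1 != x2 ->
  root G x1 -> root G x2 ->
  exists2 H, H \is a polyOver S & forall x, G.[x] = H.[x] * (x - x1) * (x - x2).
Proof.
move=> SG Sx1 Sx2 x12 /factor_theorem[H1 EG] G2.
have /factor_theorem[H EH1] : root H1 x2.
  by move: G2; rewrite EG rootM root_XsubC eq_sym (negPf x12) orbF.
exists H => [|x]; last by rewrite EG EH1 !hornerM !hornerXsubC mulrAC.
apply: polyOver_cancel_XsubC Sx2 _; rewrite -EH1.
by apply: polyOver_cancel_XsubC Sx1 _; rewrite -EG.
Qed.

End PolyOverFactor.

Definition qpoch_poly (y p : RF) k : {poly RF} := \prod_(i < k) (1 - 'X * (y * p ^+ i)%:P).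

Definition qpoch_polyV (y p : RF) k : {poly RF} := \prod_(i < k) ('X - (y * p ^+ i)%:P).

Lemma horner_qpoch_poly y p k x : (qpoch_poly y p k).[x] = qpoch (x * y) p k.
Proof. by rewrite horner_prod; apply: eq_bigr => i _; rewrite !hornerE. Qed.

Lemma horner_qpoch_polyV y p k x : x != 0 ->
  (qpoch_polyV y p k).[x] = x ^+ k * qpoch (y / x) p k.
Proof.
move=> xN0; rewrite horner_prod (eq_bigr (fun i : 'I_k => x * (1 - y / x * p ^+ i))).
  by rewrite prodrMl card_ord.
by move=> i _; rewrite hornerXsubC mulrBr mulr1 mulrA mulrCA mulfV // mulr1.
Qed.

Section QpochPolyOver.

Variables (S : subringClosed RF) (y p : RF).
Hypotheses (Sy : y \in S) (Sp : p \in S).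

Lemma qpoch_in k : qpoch y p k \in S.
Proof. by apply: rpred_prod => i _; rewrite rpredB ?rpredM ?rpredX ?rpred1. Qed.

Lemma qpoch_poly_over k : qpoch_poly y p k \is a polyOver S.
Proof.
apply: rpred_prod => i _.
by rewrite rpredB ?rpred1 ?rpredM ?polyOverX ?polyOverC ?rpredM ?rpredX.
Qed.

Lemma qpoch_polyV_over k : qpoch_polyV y p k \is a polyOver S.
Proof. by apply: rpred_prod => i _; rewrite rpredB ?polyOverX ?polyOverC ?rpredM ?rpredX. Qed.

End QpochPolyOver.

Definition qsum (e : RF) (n : nat) (x : RF) : RF :=
  \sum_(k < n) qpoch (x * rq) (rq ^+ 2) k * qpoch (e * (rq / x)) (rq ^+ 2) k
               * rq ^+ (2 * k) / qpoch (rq ^+ 2) (rq ^+ 2) k.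

Lemma qsum_chu_sum e n x : qsum e n x = chu_sum (rq ^+ 2) n (x * rq) (e * (rq / x)).
Proof. by apply: eq_bigr => k _; rewrite exprM. Qed.

Lemma qsumN1 n x : qsum (-1) n x =
  \sum_(k < n) qpoch (x * rq) (rq ^+ 2) k * qpoch (- (rq / x)) (rq ^+ 2) k
               * rq ^+ (2 * k) / qpoch (rq ^+ 2) (rq ^+ 2) k.
Proof. by apply: eq_bigr => k _; congr (_ * _ * _ / _); congr qpoch; exact: mulN1r. Qed.

Lemma qsum1 n x : qsum 1 n x =
  \sum_(k < n) qpoch (x * rq) (rq ^+ 2) k * qpoch (rq / x) (rq ^+ 2) k
               * rq ^+ (2 * k) / qpoch (rq ^+ 2) (rq ^+ 2) k.
Proof. by apply: eq_bigr => k _; congr (_ * _ * _ / _); congr qpoch; exact: mul1r. Qed.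

Lemma qsum_poly e n R : e \in qrat -> R \in qrat ->
  exists2 G, G \is a polyOver qrat &
    forall x, x != 0 -> G.[x] = x ^+ n.-1 * (qsum e n x - R).
Proof.
move=> Se SR; pose p := rq ^+ 2; pose c k := rq ^+ (2 * k) / qpoch p p k.
have Sp : p \in qrat by rewrite rpredX ?rq_qrat.
exists (\sum_(k < n) 'X^(n.-1 - k) * qpoch_poly rq p k * qpoch_polyV (e * rq) p k
                     * (c k)%:P - R%:P * 'X^(n.-1)).
  rewrite rpredB ?rpredM ?polyOverXn ?polyOverC // rpred_sum // => k _.
  rewrite !rpredM ?polyOverXn ?qpoch_poly_over ?qpoch_polyV_over ?polyOverC //;
    by rewrite ?rpred_div ?rpredM ?rpredX ?qpoch_in ?rq_qrat.
move=> x xN0; rewrite hornerD hornerN hornerCM hornerXn horner_sum mulrBr mulr_sumr.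
rewrite (mulrC R); congr (_ - _); apply: eq_bigr => k _.
rewrite !hornerM hornerXn hornerC horner_qpoch_poly horner_qpoch_polyV // -mulrA.
have le_k_n1 : (k <= n.-1)%N by have := ltn_ord k; lia.
by rewrite -{2}(subnK le_k_n1) exprD /c /p [e * (rq / x)]mulrA; ring.
Qed.

Lemma rq_div_rqX_odd m : rq / rq ^+ (2 * m).+1 * (rq ^+ 2) ^+ m = 1.
Proof.
by rewrite -exprM exprS invfM mulrA mulfV ?rq_neq0 // mul1r mulVf // expf_neq0 ?rq_neq0.
Qed.

Lemma qsum_at_e_rqX e m : e != 0 ->
  qsum e (2 * m).+1 (e * rq ^+ (2 * m).+1) = (e * rq ^+ (2 * m).+2) ^+ m.
Proof.
move=> eN0; have ltm : (m < (2 * m).+1)%N by exact: leq_pmull.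
rewrite qsum_chu_sum chu_sumC -mulrA -exprSr.
rewrite (q_Chu_Vandermonde rq2_not_root1 _ _ ltm) //.
by rewrite invfM [rq * _]mulrCA mulVKf // rq_div_rqX_odd.
Qed.

Lemma qsum_at_rqXV e m :
  qsum e (2 * m).+1 (rq ^+ (2 * m).+1)^-1 = (e * rq ^+ (2 * m).+2) ^+ m.
Proof.
have ltm : (m < (2 * m).+1)%N by exact: leq_pmull.
rewrite qsum_chu_sum invrK -exprS mulrC.
by rewrite (q_Chu_Vandermonde rq2_not_root1 _ _ ltm) // rq_div_rqX_odd.
Qed.

Lemma monomial_factor (R : idomainType) (j : nat) (G H : {poly R}) (c : R) :
  c != 0 -> G * H = c%:P * 'X^j -> exists g s, G = g%:P * 'X^s.
Proof.
elim: j G H => [|j IHj] G H cN0.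
  rewrite mulr1 => GH; exists G`_0, 0%N; rewrite mulr1; apply: size1_polyC.
  by have := size_mul_eq1 G H; rewrite GH size_polyC cN0 => /esym/andP[/eqP-> _].
move=> GH; have XN0 : 'X != 0 :> {poly R} by rewrite polyX_eq0.
have : root (G * H) 0 by rewrite GH rootE hornerCM hornerXn expr0n mulr0.
rewrite rootM => /orP[] /factor_theorem[K]; rewrite polyC0 subr0 => EK.
  have [g [s EKg]] : exists g s, K = g%:P * 'X^s.
    apply: (IHj K H cN0); apply: (mulIf XN0).
    by rewrite mulrAC -EK GH exprSr mulrA.
  by exists g, s.+1; rewrite EK EKg exprSr mulrA.
apply: (IHj G K cN0); apply: (mulIf XN0).
by rewrite -mulrA -EK GH exprSr mulrA.
Qed.

(* With a as the outer variable, a divisor of a^j d(q) is g0(q) a^s; s = 0 as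
   the modulus does not vanish at a = 0, and then g0 divides the combination
   c_1 + q^n c_0 = 1 of the a-coefficients of the modulus. *)
Lemma coprimeR_modulus n (e d : {poly rat}) j : e != 0 -> d != 0 ->
  coprimeR ((1 - var_a * var_q ^+ n) * (var_a - e ^:P * var_q ^+ n))
           (var_a ^+ j * d ^:P).
Proof.
move=> eN0 dN0 g h1 h2 Eh1 Eh2.
have sa : swapXY var_a = 'X by rewrite swapXY_polyC map_polyX.
have sq : swapXY var_q = 'X%:P by rewrite swapXY_X.
have Eh2' : swapXY g * swapXY h2 = d%:P * 'X^j.
  by rewrite -rmorphM -Eh2 rmorphM rmorphXn /= sa swapXY_map_polyC mulrC.
have [g0 [s Eg]] := monomial_factor dN0 Eh2'.
have Eh1' : g0%:P * 'X^s * swapXY h1 =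
    (- (e * 'X^n))%:P + (1 + e * 'X^n * 'X^n)%:P * 'X - ('X^n)%:P * 'X^2.
  rewrite -Eg -rmorphM -Eh1 !rmorphM !rmorphB rmorph1 /= !rmorphM !rmorphXn /=.
  by rewrite sa sq swapXY_map_polyC polyCN polyCD !polyCM polyC1 !polyC_exp; ring.
case: s Eh1' Eg => [|s] Eh1' Eg; last first.
  move/(congr1 (horner^~ 0)): Eh1'; rewrite !hornerE expr0n /= !mulr0 subr0 mul0r.
  by move/eqP; rewrite eq_sym oppr_eq0 mulf_eq0 (negPf eN0) expf_eq0 polyX_eq0 andbF.
rewrite mulr1 in Eh1' Eg.
have c0 := congr1 (fun P : Pol => P`_0) Eh1'.
have c1 := congr1 (fun P : Pol => P`_1) Eh1'.
move: c0 c1; rewrite /= !coefCM !coefE /= => c0 c1.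
have g0_unit : g0 * ((swapXY h1)`_1 + 'X^n * (swapXY h1)`_0) = 1.
  by rewrite mulrDr mulrCA c0 c1; ring.
rewrite -[g]swapXYK Eg swapXY_polyC; apply: rmorph_unit; apply/unitrPr.
by exists ((swapXY h1)`_1 + 'X^n * (swapXY h1)`_0).
Qed.

Lemma toRF_modulus n (e : {poly rat}) :
  toRF ((1 - var_a * var_q ^+ n) * (var_a - e ^:P * var_q ^+ n)) =
  (1 - ra * rq ^+ n) * (ra - polyq e * rq ^+ n).
Proof. by rewrite /ra /rq /polyq /toRF !(rmorphM, rmorphB, rmorph1, rmorphXn). Qed.

Lemma eq_mul_div_of_factor (F : fieldType) (s a b y h c d : F) j :
  a != 0 -> y != 0 -> d != 0 ->
  a ^+ j * s = h * (a - b) * (a - y^-1) -> - (h / y) = c / d ->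
  s = (1 - a * y) * (a - b) * c / (a ^+ j * d).
Proof.
move=> aN0 yN0 dN0 Es Ec; have -> : c = - (h / y) * d by rewrite Ec divfK.
have ajN0 : a ^+ j != 0 by rewrite expf_neq0.
by rewrite -[s](mulKf ajN0) Es; field; rewrite ajN0 yN0 dN0.
Qed.

Lemma qsum_congr (e : {poly rat}) m : e != 0 ->
  congr_mod (qsum (polyq e) (2 * m).+1 ra) ((polyq e * rq ^+ (2 * m).+2) ^+ m)
    ((1 - var_a * var_q ^+ (2 * m).+1) * (var_a - e ^:P * var_q ^+ (2 * m).+1)).
Proof.
set n := (2 * m).+1; set E := polyq e; set R := (E * _) ^+ m => eN0.
have EN0 : E != 0 by rewrite polyq_eq0.
have qnN0 : rq ^+ n != 0 by rewrite expf_neq0 ?rq_neq0.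
have SE : E \in qrat by exact: polyq_qrat.
have Sqn : rq ^+ n \in qrat by rewrite rpredX ?rq_qrat.
have SR : R \in qrat by rewrite rpredX ?rpredM ?rpredX ?rq_qrat.
have [G SG EG] := qsum_poly n SE SR.
set x1 := E * rq ^+ n; set x2 := (rq ^+ n)^-1.
have x12 : x1 != x2.
  apply/eqP => Ex; have : polyq (e * 'X^(n + n)) = polyq 1.
    rewrite (rmorph1 polyq) (rmorphM polyq) (rmorphXn polyq) /= polyqX.
    by rewrite exprD mulrA -/E -/x1 Ex mulVf.
  move/eqP; rewrite -subr_eq0 -(rmorphB polyq) polyq_eq0 subr_eq0.
  move=> /eqP/(congr1 (size : {poly rat} -> nat)).
  by rewrite size_mulXn // size_poly1 /n; lia.
have G_root x : x != 0 -> qsum E n x = R -> root G x.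
  by move=> xN0 Ex; rewrite /root EG // Ex subrr mulr0.
have Sx1 : x1 \in qrat by rewrite rpredM.
have Sx2 : x2 \in qrat by rewrite rpredV.
have [H SH EGH] := polyOver_factor2_roots SG Sx1 Sx2 x12
  (G_root _ (mulf_neq0 EN0 qnN0) (qsum_at_e_rqX m EN0))
  (G_root _ (invr_neq0 qnN0) (qsum_at_rqXV E m)).
have EGa : ra ^+ n.-1 * (qsum E n ra - R) = H.[ra] * (ra - x1) * (ra - x2).
  by rewrite -(EG ra ra_neq0) EGH.
have /qfracP[C [d [dN0 EHd]]] : - (H.[ra] * x2) \in qfrac.
  rewrite rpredN rpredM ?rpred_horner ?ra_qfrac ?qrat_sub_qfrac //.
  exact: (polyOverS qrat_sub_qfrac).
exists C, (var_a ^+ n.-1 * d ^:P); split; first exact: coprimeR_modulus.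
have dN0' : polyq d != 0 by rewrite polyq_eq0.
rewrite toRF_modulus (rmorphM toRF) (rmorphXn toRF) -/ra -/(polyq d).
exact: (eq_mul_div_of_factor ra_neq0 qnN0 dN0' EGa EHd).
Qed.

Theorem theorem4p5 (n : nat) (hn : (0 < n)%N) (hodd : odd n) :
  congr_mod
    (\sum_(k < n) qpoch (ra * rq) (rq ^+ 2) k * qpoch (- (rq / ra)) (rq ^+ 2) k
                  * rq ^+ (2 * k) / qpoch (rq ^+ 2) (rq ^+ 2) k)
    ((-1) ^+ ((n - 1) %/ 2) * rq ^+ ((n ^ 2 - 1) %/ 2))
    ((1 - var_a * var_q ^+ n) * (var_a + var_q ^+ n))
  /\
  congr_mod
    (\sum_(k < n) qpoch (ra * rq) (rq ^+ 2) k * qpoch (rq / ra) (rq ^+ 2) k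
                  * rq ^+ (2 * k) / qpoch (rq ^+ 2) (rq ^+ 2) k)
    (rq ^+ ((n ^ 2 - 1) %/ 2))
    ((1 - var_a * var_q ^+ n) * (var_a - var_q ^+ n)).
Proof.
have [m ->] : exists m, n = (2 * m).+1.
  by exists n./2; rewrite -{1}(odd_double_half n) hodd mul2n.
have -> : (((2 * m).+1 - 1) %/ 2 = m)%N by rewrite subn1 /= mulKn.
have -> : (((2 * m).+1 ^ 2 - 1) %/ 2 = (2 * m).+2 * m)%N.
  have -> : ((2 * m).+1 ^ 2 - 1 = (2 * m).+2 * m * 2)%N by lia.
  by rewrite mulnK.
have N1N0 : (-1 : {poly rat}) != 0 by rewrite oppr_eq0 oner_eq0.
split.
  have ER : (-1 * rq ^+ (2 * m).+2) ^+ m = (-1) ^+ m * rq ^+ ((2 * m).+2 * m).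
    by rewrite exprMn exprM.
  have EP : var_a - (-1) ^:P * var_q ^+ (2 * m).+1 = var_a + var_q ^+ (2 * m).+1.
    by rewrite (rmorphN1 (map_poly polyC)) mulN1r opprK.
  by move: (qsum_congr m N1N0); rewrite (rmorphN1 polyq) qsumN1 ER EP.
have ER : (1 * rq ^+ (2 * m).+2) ^+ m = rq ^+ ((2 * m).+2 * m) by rewrite mul1r exprM.
have EP : var_a - 1 ^:P * var_q ^+ (2 * m).+1 = var_a - var_q ^+ (2 * m).+1.
  by rewrite (rmorph1 (map_poly polyC)) mul1r.
by move: (qsum_congr m (oner_neq0 _)); rewrite (rmorph1 polyq) qsum1 ER EP.
Qed.
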